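(* Let $\mathcal{H}$ be a hypertree, $B$ a basic set of $\mathcal{H}$, and $u,v$ two different elements of $B$. Then [$I_\mathcal{H}(uv)=B$ and $uv$ is an edge of some host tree of $\mathcal{H}$] if and only if $u$ and $v$ lie in two different connected components of the 2-section of $\overline{\mathcal{H}_B}$.
   Context: A hypergraph $\mathcal{H}$ has a finite vertex set $V(\mathcal{H})$ and a finite family of nonempty subsets (edges). A host tree is a tree on $V(\mathcal{H})$ in which every edge induces a connected subgraph; a hypertree is a hypergraph with a host tree. For $V'\subseteq V(\mathcal{H})$, $I_\mathcal{H}(V')$ is the intersection of all edges containing $V'$, or $V(\mathcal{H})$ if none does; $I_\mathcal{H}(uv)=I_\mathcal{H}(\{u,v\})$. For $A\subseteq V(\mathcal{H})$, $\overline{\mathcal{H}_A}$ is the hypergraph on $V(\mathcal{H})$ whose edges are the edges of $\mathcal{H}$ not containing $A$. The 2-section of a hypergraph is the graph on its vertices where two distinct vertices are adjacent iff some edge contains both. A union of sets is connected if the intersection graph of the sets is connected. $Comp(\mathcal{H})$ is the hypergraph without repeated edges on $V(\mathcal{H})$ whose edges are $V(\mathcal{H})$, all singletons, and all proper subsets obtainable from edges of $\mathcal{H}$ by repeated nonempty intersections and connected unions; a basic set of $\mathcal{H}$ is an edge of $Comp(\mathcal{H})$ with more than one vertex that is not a connected union of strictly smaller edges of $Comp(\mathcal{H})$. *)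

From mathcomp Require Import all_boot.
Set Implicit Arguments. Unset Strict Implicit. Unset Printing Implicit Defensive.

Section Hyper.
Variable V : finType.

(* A hypergraph on the vertex set V (the whole finite type) is a finite
   family (sequence, repetitions allowed) of nonempty subsets of V. *)
Definition hyp_nonempty (H : seq {set V}) : Prop := forall e, e \in H -> e != set0.

Definition simple_graph (T : {set {set V}}) : Prop := forall e, e \in T -> #|e| = 2.

Definition adj_in (T : {set {set V}}) (S : {set V}) : rel V :=
  fun x y => [&& x \in S, y \in S & [set x; y] \in T].

Definition induces_connected (T : {set {set V}}) (S : {set V}) : Prop :=
  forall x y, x \in S -> y \in S -> connect (adj_in T S) x y.

(* A tree on V: a connected graph in which every edge is a bridge
   (i.e. a minimally connected graph). *)
Definition is_tree (T : {set {set V}}) : Prop :=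
  [/\ simple_graph T, induces_connected T setT &
      forall x y, [set x; y] \in T -> ~~ connect (adj_in (T :\ [set x; y]) setT) x y].

Definition host_tree (H : seq {set V}) (T : {set {set V}}) : Prop :=
  is_tree T /\ forall e, e \in H -> induces_connected T e.

Definition hypertree (H : seq {set V}) : Prop :=
  hyp_nonempty H /\ exists T, host_tree H T.

(* I_H(A): intersection of all edges containing A (setT if there are none). *)
Definition I_H (H : seq {set V}) (A : {set V}) : {set V} :=
  \big[@setI V/setT]_(e <- H | A \subset (e : {set V})) e.

Definition Hbar (H : seq {set V}) (A : {set V}) : seq {set V} :=
  [seq e <- H | ~~ (A \subset (e : {set V}))].

Definition two_section (H : seq {set V}) : rel V :=
  fun x y => (x != y) && has (fun e : {set V} => (x \in e) && (y \in e)) H.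

Definition inter_rel (F : {set {set V}}) : rel {set V} :=
  fun A B => [&& A \in F, B \in F & A :&: B != set0].
Definition inter_connected (F : {set {set V}}) : Prop :=
  forall A B, A \in F -> B \in F -> connect (inter_rel F) A B.

Inductive obtainable (H : seq {set V}) : {set V} -> Prop :=
| ob_edge e : e \in H -> obtainable H e
| ob_inter A B : obtainable H A -> obtainable H B -> A :&: B != set0 ->
    obtainable H (A :&: B)
| ob_union (F : {set {set V}}) : F != set0 ->
    (forall A, A \in F -> obtainable H A) -> inter_connected F ->
    obtainable H (\bigcup_(A in F) A).

Definition comp_edge (H : seq {set V}) (X : {set V}) : Prop :=
  X = setT \/ (exists x, X = [set x]) \/ (obtainable H X /\ X \proper setT).

Definition basic_set (H : seq {set V}) (B : {set V}) : Prop :=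
  [/\ comp_edge H B, 1 < #|B| &
      ~ exists F : {set {set V}},
          [/\ forall A, A \in F -> comp_edge H A /\ A \proper B,
              inter_connected F &
              B = \bigcup_(A in F) A]].

End Hyper.

(* If u and v are separated in the 2-section of the edges not containing B, every
   edge containing both u and v contains B, and conversely B, being built from edges
   by intersections and connected unions, either contains I_H(uv) or is connected in
   that 2-section, which the separation of u and v rules out; so I_H(uv) = B.
   For the host tree, walk from u to v in any host tree T and leave the 2-section
   component of u through a tree edge xy; exchanging xy for uv gives a tree again,
   and an edge of H that contained xy must contain B (else x and y would be adjacent
   in the 2-section), hence u and v, so it still induces a subtree.  Conversely, if
   uv is a tree edge and I_H(uv) = B, the edges not containing B never use uv, so
   they cannot connect its two sides. *)
From mathcomp Require Import all_boot.
Set Implicit Arguments. Unset Strict Implicit. Unset Printing Implicit Defensive.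

Local Notation conn T S := (connect (adj_in T S)).

Section Graphs.
Variable V : finType.
Implicit Types (T D : {set {set V}}) (S : {set V}).

Lemma set2_eq (a b c d : V) : [set a; b] = [set c; d] ->
  (a = c /\ b = d) \/ (a = d /\ b = c).
Proof.
move=> E.
have ha : a \in [set c; d] by rewrite -E set21.
have hb : b \in [set c; d] by rewrite -E set22.
have hc : c \in [set a; b] by rewrite E set21.
have hd : d \in [set a; b] by rewrite E set22.
move: ha hb hc hd; rewrite !inE.
by do 4 (case/orP=> /eqP ?); subst; auto.
Qed.

Lemma adj_in_sym T S : symmetric (adj_in T S).
Proof. by move=> x y; rewrite /adj_in setUC; case: (x \in S); case: (y \in S). Qed.

Lemma connect_adj_in_sym T S : connect_sym (adj_in T S).
Proof. exact: sym_connect_sym (@adj_in_sym T S). Qed.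

Lemma connect_adj_in_sub T T' S S' a b : T \subset T' -> S \subset S' ->
  conn T S a b -> conn T' S' a b.
Proof.
move=> sTT' sSS'; apply: connect_sub => c d /and3P[cS dS cdT].
apply: connect1.
by rewrite /adj_in (subsetP sSS' _ cS) (subsetP sSS' _ dS) (subsetP sTT' _ cdT).
Qed.

Lemma connect_via_edge T D S (p q a b : V) :
  T \subset [set p; q] |: D -> conn T S a b ->
  [\/ conn D S a b, conn D S a p /\ conn D S q b | conn D S a q /\ conn D S p b].
Proof.
move=> sTD /connectP[s]; elim: s a => [|w s IH] a /=.
  by move=> _ ->; apply: Or31; apply: connect0.
case/andP=> aw pw eb; have := IH w pw eb.
move: aw => /and3P[aS wS /(subsetP sTD)]; rewrite in_setU1 => /orP[/eqP E|awD].
  case: (set2_eq E) => [[-> ->]|[-> ->]] [c|[c1 c2]|[c1 c2]].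
  - by apply: Or32; split=> //; apply: connect0.
  - by apply: Or32; split=> //; apply: connect0.
  - by apply: Or31.
  - by apply: Or33; split=> //; apply: connect0.
  - by apply: Or31.
  - by apply: Or33; split=> //; apply: connect0.
have aw : conn D S a w by apply: connect1; rewrite /adj_in aS wS awD.
case=> [c|[c1 c2]|[c1 c2]].
- by apply: Or31; apply: connect_trans aw c.
- by apply: Or32; split=> //; apply: connect_trans aw c1.
- by apply: Or33; split=> //; apply: connect_trans aw c1.
Qed.

Lemma crossing_edge_path T (P : pred V) a s :
  path (adj_in T setT) a s -> uniq (a :: s) -> P a -> ~~ P (last a s) ->
  exists x y, [/\ [set x; y] \in T, P x, ~~ P y,
     conn (T :\ [set x; y]) setT a x & conn (T :\ [set x; y]) setT y (last a s)]
     /\ (x \in a :: s /\ y \in a :: s).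
Proof.
elim: s a => [|w s IH] a /=; first by move=> _ _ ->.
case/andP=> /and3P[_ _ awT] pw /andP[nas us] Pa Pl.
case Pw: (P w).
  have [x [y [[xyT Px Py c1 c2] [xs ys]]]] := IH w pw us Pw Pl.
  exists x, y; split; last by rewrite !inE in xs ys *; rewrite xs ys !orbT.
  split=> //; apply: connect_trans c1; apply: connect1.
  rewrite /adj_in !in_setT in_setD1 awT andbT /=.
  apply/negP => /eqP E; move: (set21 a w); rewrite E in_set2.
  by case/orP=> /eqP ea; move: nas; rewrite ea ?xs ?ys.
exists a, w; split; last by rewrite !inE !eqxx ?orbT.
split=> //; first by rewrite Pw.
apply/connectP; exists s => //.
apply: (@sub_in_path _ (predC1 a)) pw; last first.
  by apply/allP => z zs /=; apply/eqP => za; move: nas; rewrite -za zs.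
move=> c d; rewrite !inE => ca da /and3P[_ _ cdT].
rewrite /adj_in !in_setT in_setD1 cdT andbT /=.
apply/negP => /eqP E; move: (set21 a w); rewrite -E in_set2.
by case/orP=> /eqP ea; [move: ca | move: da]; rewrite ea eqxx.
Qed.

Lemma crossing_edge T (P : pred V) a b : conn T setT a b -> P a -> ~~ P b ->
  exists x y, [/\ [set x; y] \in T, P x, ~~ P y,
     conn (T :\ [set x; y]) setT a x & conn (T :\ [set x; y]) setT y b].
Proof.
move=> /connectP[s ps ->{b}]; case: (shortenP ps) => s' ps' us' _ Pa Pb.
by have [x [y [? _]]] := crossing_edge_path ps' us' Pa Pb; exists x, y.
Qed.

Lemma connect_bridge_side T D S x y a : T \subset [set x; y] |: D ->
  ~~ conn D setT x y -> conn D setT x a -> conn T S x a -> conn D S x a.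
Proof.
move=> sTD bridge xa /(connect_via_edge sTD) [//|[_ ya]|[xy _]]; case/negP: bridge.
  apply: connect_trans xa _; rewrite connect_adj_in_sym.
  exact: connect_adj_in_sub (subxx _) (subsetT _) ya.
exact: connect_adj_in_sub (subxx _) (subsetT _) xy.
Qed.

Lemma is_tree_exchange T x y u v : is_tree T -> [set x; y] \in T -> u != v ->
  ~~ conn (T :\ [set x; y]) setT u v -> is_tree ([set u; v] |: (T :\ [set x; y])).
Proof.
move=> [sT cT brT] xyT uv nuv; set D := T :\ [set x; y]; set T' := _ |: D.
have DT' : D \subset T' by apply: subsetUr.
have sTD : T \subset [set x; y] |: D.
  by apply/subsetP => z; rewrite !inE; case: (z == [set x; y]).
have uvT' : adj_in T' setT u v by rewrite /adj_in !in_setT setU11.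
have lift a b : conn D setT a b -> conn T' setT a b.
  exact: connect_adj_in_sub DT' (subxx _).
have xyT' : conn T' setT x y.
  case: (connect_via_edge sTD (cT u v (in_setT _) (in_setT _))) => [uv'|[ux yv]|[uy xv]].
  - by rewrite uv' in nuv.
  - apply: connect_trans (lift _ _ _) (connect_trans (connect1 uvT') (lift _ _ _)).
    + by rewrite connect_adj_in_sym.
    + by rewrite connect_adj_in_sym.
  - apply: connect_trans (lift _ _ xv) (connect_trans (connect1 _) (lift _ _ uy)).
    by rewrite adj_in_sym.
split.
- move=> e; rewrite in_setU1 => /orP[/eqP->|]; first by rewrite cards2 uv.
  by rewrite in_setD1 => /andP[_ /sT].
- move=> c d _ _; apply: connect_sub _ (cT c d (in_setT _) (in_setT _)).
  move=> c' d' /and3P[_ _ cdT].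
  case: (eqVneq [set c'; d'] [set x; y]) => E.
    by case: (set2_eq E) => [[-> ->]|[-> ->]] //; rewrite connect_adj_in_sym.
  by apply: connect1; rewrite /adj_in !in_setT in_setU1 in_setD1 E cdT orbT.
move=> a b; rewrite in_setU1 in_setD1.
case: (eqVneq [set a; b] [set u; v]) => E /=.
  move=> _; apply/negP => c; case/negP: nuv.
  have ab : conn D setT a b.
    apply: connect_adj_in_sub (subxx _) c.
    by apply/subsetP => z; rewrite E !inE; case: (z == [set u; v]).
  by case: (set2_eq E) => [[<- <-]|[<- <-]]; rewrite // connect_adj_in_sym.
move=> /andP[nab abT]; apply/negP => c.
have sub : T' :\ [set a; b] \subset [set u; v] |: (D :\ [set a; b]).
  by apply/subsetP => z; rewrite !inE; case: (z == [set u; v]); case: (z == [set a; b]).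
have ab : conn D setT a b.
  by apply: connect1; rewrite /adj_in !in_setT in_setD1 nab abT.
have DabD a' b' : conn (D :\ [set a; b]) setT a' b' -> conn D setT a' b'.
  exact: connect_adj_in_sub (subD1set _ _) (subxx _).
case: (connect_via_edge sub c) => [c1|[au vb]|[av ub]].
- case/negP: (brT a b abT); apply: connect_adj_in_sub (subxx _) c1.
  by apply/subsetP => z; rewrite !inE; case: (z == [set a; b]) => //= /andP[].
- case/negP: nuv; move/DabD: au; move/DabD: vb.
  rewrite connect_adj_in_sym => bv; rewrite connect_adj_in_sym => ua.
  exact: connect_trans ua (connect_trans ab bv).
- case/negP: nuv; move/DabD: av; move/DabD: ub => ub av.
  by rewrite connect_adj_in_sym in ab; exact: connect_trans ub (connect_trans ab av).
Qed.

Lemma induces_connected_exchange T S x y u v :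
  ~~ conn (T :\ [set x; y]) setT x y ->
  conn (T :\ [set x; y]) setT x u -> conn (T :\ [set x; y]) setT y v ->
  (x \in S -> y \in S -> u \in S /\ v \in S) -> induces_connected T S ->
  induces_connected ([set u; v] |: (T :\ [set x; y])) S.
Proof.
move=> bridge xu yv sub_uv hS; set D := T :\ [set x; y]; set T' := _ |: D.
have sTD : T \subset [set x; y] |: D.
  by apply/subsetP => z; rewrite !inE; case: (z == [set x; y]).
have lift a b : conn D S a b -> conn T' S a b.
  exact: connect_adj_in_sub (subsetUr _ _) (subxx _).
move=> c d cS dS; apply: connect_sub _ (hS c d cS dS) => c' d' /and3P[c'S d'S cdT].
case: (eqVneq [set c'; d'] [set x; y]) => E; last first.
  by apply: connect1; rewrite /adj_in c'S d'S in_setU1 in_setD1 E cdT orbT.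
have [xS yS] : x \in S /\ y \in S.
  by case: (set2_eq E) => [[<- <-]|[<- <-]].
have [uS vS] := sub_uv xS yS.
have xuS : conn D S x u by apply: connect_bridge_side sTD bridge xu (hS x u xS uS).
have yvS : conn D S y v.
  apply: (@connect_bridge_side T D S y x) _ _ yv (hS y v yS vS).
  - by rewrite [[set y; x]]setUC.
  - by rewrite connect_adj_in_sym.
have uvS : adj_in T' S u v by rewrite /adj_in uS vS setU11.
have xy' : conn T' S x y.
  apply: connect_trans (lift _ _ xuS) (connect_trans (connect1 uvS) _).
  by rewrite connect_adj_in_sym; apply: lift.
by case: (set2_eq E) => [[-> ->]|[-> ->]] //; rewrite connect_adj_in_sym.
Qed.

End Graphs.

Section Hypergraphs.
Variable V : finType.
Implicit Types (H : seq {set V}) (A B I X e : {set V}) (G : rel V).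

Definition connected_set G X := {in X &, forall a b, connect G a b}.

Lemma I_H_sub H A e : e \in H -> A \subset e -> I_H H A \subset e.
Proof. by move=> eH Ae; rewrite /I_H (big_rem e) // Ae subsetIl. Qed.

Lemma sub_I_H H A X :
  (forall e, e \in H -> A \subset e -> X \subset e) -> X \subset I_H H A.
Proof.
move=> hX; rewrite /I_H big_seq_cond.
elim/big_ind: _ => [|Y Z XY XZ|e /andP[]].
- exact: subsetT.
- by rewrite subsetI XY XZ.
- exact: hX.
Qed.

Lemma two_section_Hbar H A e x y : e \in H -> ~~ (A \subset e) ->
  x != y -> x \in e -> y \in e -> two_section (Hbar H A) x y.
Proof.
move=> eH nAe xy xe ye; rewrite /two_section xy; apply/hasP.
by exists e; rewrite ?mem_filter ?nAe ?xe ?ye.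
Qed.

Lemma connected_set_bigcup G (F : {set {set V}}) : inter_connected F ->
  (forall A, A \in F -> connected_set G A) -> connected_set G (\bigcup_(A in F) A).
Proof.
move=> cF hF a b /bigcupP[A AF aA] /bigcupP[C CF].
case/connectP: (cF A C AF CF) => p + ->{C CF}.
elim: p A a AF aA => [|W p IH] A a AF aA /=; first by move=> _; exact: hF.
case/andP=> /and3P[_ WF /set0Pn[z]]; rewrite inE => /andP[zA zW] pW bl.
exact: connect_trans (hF A AF a z aA zA) (IH W z WF zW pW bl).
Qed.

Lemma obtainable_sub_or_connected H G I X :
  (forall e, e \in H -> I \subset e \/ connected_set G e) ->
  obtainable H X -> I \subset X \/ connected_set G X.
Proof.
move=> hE; elim=> {X}.
- exact: hE.
- move=> A C _ [IA|cA] _ [IC|cC] _.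
  + by left; rewrite subsetI IA IC.
  + by right=> a b /setIP[_ aC] /setIP[_ bC]; exact: cC.
  + by right=> a b /setIP[aA _] /setIP[bA _]; exact: cA.
  + by right=> a b /setIP[_ aC] /setIP[_ bC]; exact: cC.
- move=> F _ _ IHF cF.
  case: (boolP [exists A in F, I \subset A]) => [/existsP[A /andP[AF IA]]|nIF].
    by left; apply: subset_trans IA (bigcup_sup _ AF).
  right; apply: connected_set_bigcup cF _ => A AF.
  case: (IHF A AF) => // IA.
  by case/negP: nIF; apply/existsP; exists A; rewrite AF IA.
Qed.

Section Separated.
Variables (H : seq {set V}) (B : {set V}) (u v : V).
Hypotheses (uB : u \in B) (vB : v \in B) (uv : u != v).
Hypothesis separated : ~~ connect (two_section (Hbar H B)) u v.

Lemma sub_I_H_set2 : B \subset I_H H [set u; v].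
Proof.
apply: sub_I_H => e eH; rewrite subUset !sub1set => /andP[ue ve].
apply/negPn/negP => nBe; case/negP: separated.
exact: connect1 (two_section_Hbar eH nBe uv ue ve).
Qed.

Lemma I_H_set2_sub : comp_edge H B -> I_H H [set u; v] \subset B.
Proof.
case=> [->|[[x Bx]|[obB _]]]; first exact: subsetT.
  by move: uB vB uv; rewrite Bx !inE => /eqP-> /eqP->; rewrite eqxx.
have edges e : e \in H ->
    I_H H [set u; v] \subset e \/ connected_set (two_section (Hbar H B)) e.
  move=> eH; case: (boolP (B \subset e)) => Be.
    by left; apply: I_H_sub eH _; rewrite subUset !sub1set !(subsetP Be).
  right=> a b ae be; case: (eqVneq a b) => [->|ab]; first exact: connect0.
  exact: connect1 (two_section_Hbar eH Be ab ae be).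
case: (obtainable_sub_or_connected edges obB) => // cB.
by case/negP: separated; apply: cB.
Qed.

Lemma host_tree_through_set2 T : host_tree H T ->
  exists T', host_tree H T' /\ [set u; v] \in T'.
Proof.
move=> [treeT hostT]; have [_ cT brT] := treeT; set G := two_section (Hbar H B).
have [x [y [xyT ux nuy cux cyv]]] :=
  crossing_edge (P := connect G u) (cT u v (in_setT _) (in_setT _)) (connect0 _ _) separated.
have xy : x != y by apply: contraNneq nuy => <-.
have nxy : ~~ connect G x y by apply: contra nuy; apply: connect_trans ux.
have bridge := brT x y xyT.
have cxu : conn (T :\ [set x; y]) setT x u by rewrite connect_adj_in_sym.
exists ([set u; v] |: (T :\ [set x; y])); split; last exact: setU11.
split.
  apply: is_tree_exchange treeT xyT uv _; apply: contra bridge => cuv.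
  apply: connect_trans cxu (connect_trans cuv _); by rewrite connect_adj_in_sym.
move=> e eH; apply: induces_connected_exchange bridge cxu cyv _ (hostT e eH).
move=> xe ye; suff Be : B \subset e by rewrite !(subsetP Be).
apply/negPn/negP => nBe; case/negP: nxy.
exact: connect1 (two_section_Hbar eH nBe xy xe ye).
Qed.

End Separated.

Lemma connect_Hbar_avoids_edge H T A u v a b : host_tree H T -> [set u; v] \in T ->
  A \subset I_H H [set u; v] ->
  connect (two_section (Hbar H A)) a b -> conn (T :\ [set u; v]) setT a b.
Proof.
move=> [_ hostT] uvT AI; apply: connect_sub => c d /andP[_ /hasP[e]].
rewrite mem_filter => /andP[nAe eH] /andP[ce de].
apply: connect_sub _ (hostT e eH c d ce de) => c' d' /and3P[c'e d'e cdT].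
apply: connect1; rewrite /adj_in !in_setT in_setD1 cdT andbT /=.
apply: contra nAe => /eqP E; apply: subset_trans AI (I_H_sub eH _).
by rewrite subUset !sub1set; case: (set2_eq E) => [[<- <-]|[<- <-]]; rewrite ?c'e ?d'e.
Qed.

End Hypergraphs.

Theorem mainTheorem12 (V : finType) (H : seq {set V}) (B : {set V}) (u v : V) :
  hypertree H -> basic_set H B -> u \in B -> v \in B -> u != v ->
  ((I_H H [set u; v] = B /\ exists T, host_tree H T /\ [set u; v] \in T)
   <-> ~~ connect (two_section (Hbar H B)) u v).
Proof.
move=> [_ [T hostT]] [compB _ _] uB vB uv; split.
  move=> [IB [T' [hostT' uvT']]]; apply/negP => cuv.
  have [[_ _ bridges] _] := hostT'.
  case/negP: (bridges u v uvT').
  by apply: connect_Hbar_avoids_edge hostT' uvT' _ cuv; rewrite IB.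
move=> separated; split.
  apply/eqP; rewrite eqEsubset (I_H_set2_sub uB vB uv separated compB).
  exact: sub_I_H_set2 uv separated.
exact: (host_tree_through_set2 uB vB uv separated hostT).
Qed.
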